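(* Let $\mathrm x$ be a binary word of length $m<\Bbbk-1$. Then, as operators on $\widetilde{\mathcal H}=\mathcal H\oplus P'_{[\![1]\!]}\mathcal H$, $$\widetilde U_\theta^*\,(P_{[\![\mathrm x]\!]}\oplus0)\,\widetilde U_\theta=P_{[\![0]\!]}P_{\bar T^{-1}[\![\mathrm x]\!]}\oplus P'_{[\![1]\!]}P_{\bar T^{-1}[\![\mathrm x]\!]},$$ $$\widetilde U_\theta^*\,(0\oplus P'_{[\![1]\!]}P_{[\![\mathrm x]\!]})\,\widetilde U_\theta=P_{[\![1]\!]}P_{\bar T^{-1}[\![\mathrm x]\!]}\oplus0 .$$
   Context: Let $\Bbbk\geq3$ and $\mathcal H=(\mathbb C^2)^{\otimes\Bbbk}$ with orthonormal basis $|\mathrm y\rangle=|\mathrm y_1\rangle\otimes\cdots\otimes|\mathrm y_\Bbbk\rangle$, $\mathrm y_i\in\{0,1\}$. For a binary word $\mathrm w=\mathrm w_1\dots\mathrm w_m$ ($m\leq\Bbbk$), $P_{[\![\mathrm w]\!]}$ is the orthogonal projection onto the span of the $|\mathrm y\rangle$ with $\mathrm y_1\dots\mathrm y_m=\mathrm w$; $[\![\mathrm w]\!]\subset[0,1]$ is the dyadic cylinder of points whose first $m$ binary digits are $\mathrm w$. $\bar T(x)=2x\bmod1$, so $\bar T^{-n}[\![\mathrm w]\!]=\bigcup_{|\mathrm y|=n}[\![\mathrm y\mathrm w]\!]$, and $P_{\bar T^{-n}[\![\mathrm w]\!]}=\sum_{|\mathrm y|=n}P_{[\![\mathrm y\mathrm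 w]\!]}$. Let $\mathbf U$ be a $2\times2$ unitary with all entries of modulus $2^{-1/2}$, $\bar U|\mathrm y\rangle=|\mathrm y_2\rangle\otimes\cdots\otimes|\mathrm y_\Bbbk\rangle\otimes\mathbf U|\mathrm y_1\rangle$, $\sigma$ the unitary exchanging the last two tensor factors, and $P'_{[\![j]\!]}=\bar UP_{[\![j]\!]}\bar U^*$ for $j\in\{0,1\}$. Tower space $\widetilde{\mathcal H}=\mathcal H\oplus P'_{[\![1]\!]}\mathcal H$ with the direct-sum scalar product, and $\widetilde U_\theta(\phi_0,\phi_1)=\big(\sigma\bar UP'_{[\![1]\!]}\phi_1+\bar UP_{[\![0]\!]}\phi_0,\ e^{i\theta}\bar UP_{[\![1]\!]}\phi_0\big)$, $\theta\in\mathbb R$. *)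

From HB Require Import structures.
From mathcomp Require Import all_boot all_order all_algebra.
From mathcomp Require Import complex.
From mathcomp Require Import all_classical all_reals all_analysis.

Set Implicit Arguments.
Unset Strict Implicit.
Unset Printing Implicit Defensive.

Import Order.TTheory GRing.Theory Num.Theory.
Local Open Scope ring_scope.

(* Basis labels of H = (C^2)^{(x) k}: binary words y = y_1 ... y_k,
   stored as k-tuples (position j of the tuple, 0-based, is y_{j+1}). *)
Definition word (k : nat) := (k.-tuple bool)%type.

Notation vec C k := {ffun word k -> C}.

Section Defs.
Variables (C : numClosedFieldType) (k : nat).

Definition dot (u v : vec C k) : C := \sum_y (u y)^* * v y.

(* Operators given by their matrix elements  K z y = <z|K|y>. *)
Definition kapp (K : word k -> word k -> C) (v : vec C k) : vec C k :=
  [ffun z => \sum_y K z y * v y].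
Definition kadj (K : word k -> word k -> C) : word k -> word k -> C :=
  fun z y => (K y z)^*.

Definition Pw (w : seq bool) (v : vec C k) : vec C k :=
  [ffun y : word k => if take (size w) y == w then v y else 0].

(* P_{T^{-n}[[w]]} = \sum_{|y| = n} P_[[y w]]. *)
Definition PT (n : nat) (w : seq bool) (v : vec C k) : vec C k :=
  \sum_(u : n.-tuple bool) Pw (u ++ w) v.

Definition b2o (b : bool) : 'I_2 := inord (nat_of_bool b).

(* Ubar |y> = |y_2 ... y_k> (x) U |y_1>, i.e.
   <z|Ubar|y> = [z_1..z_{k-1} = y_2..y_k] * <z_k|U|y_1>. *)
Definition Ubar_ker (U : 'M[C]_2) (z y : word k) : C :=
  (if take k.-1 z == behead y then 1 else 0) *
  U (b2o (last false z)) (b2o (head false y)).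

(* sigma: exchange of the last two tensor factors,
   <z|sigma|y> = 1 iff z is y with its last two letters exchanged. *)
Definition sigma_ker (z y : word k) : C :=
  if [&& take (k - 2) z == take (k - 2) y,
         nth false z (k - 2) == nth false y k.-1 &
         nth false z k.-1 == nth false y (k - 2)] then 1 else 0.

Definition Ubar (U : 'M[C]_2) (v : vec C k) : vec C k := kapp (Ubar_ker U) v.
Definition Ubar_adj (U : 'M[C]_2) (v : vec C k) : vec C k :=
  kapp (kadj (Ubar_ker U)) v.
Definition sigma (v : vec C k) : vec C k := kapp sigma_ker v.

Definition Pprime (U : 'M[C]_2) (j : bool) (v : vec C k) : vec C k :=
  Ubar U (Pw [:: j] (Ubar_adj U v)).

(* Tower space  H~ = H (+) P'_[[1]] H, inside H x H. *)
Definition in_tower (U : 'M[C]_2) (phi : vec C k * vec C k) : Prop :=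
  Pprime U true phi.2 = phi.2.

Definition tdot (phi psi : vec C k * vec C k) : C :=
  dot phi.1 psi.1 + dot phi.2 psi.2.

Definition Utilde (U : 'M[C]_2) (c : C) (phi : vec C k * vec C k)
  : vec C k * vec C k :=
  (sigma (Ubar U (Pprime U true phi.2)) + Ubar U (Pw [:: false] phi.1),
   [ffun y => c * Ubar U (Pw [:: true] phi.1) y]).

(* "U~^* A U~ = B as operators on H~", the adjoint U~^* being taken in H~
   for the direct-sum scalar product: B maps H~ into H~, and for all
   phi, chi in H~,  <U~ chi, A U~ phi> = <chi, B phi>. *)
Definition tower_conj_eq (U : 'M[C]_2) (Ut A B : vec C k * vec C k -> vec C k * vec C k)
  : Prop :=
  forall phi, in_tower U phi ->
    in_tower U (B phi) /\
    forall chi, in_tower U chi -> tdot (Ut chi) (A (Ut phi)) = tdot chi (B phi).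

End Defs.

Definition unitary2 (C : numClosedFieldType) (U : 'M[C]_2) : Prop :=
  U *m (map_mx Num.conj U)^T = 1%:M.

Definition expi (R : realType) (theta : R) : R[i] := (cos theta +i* sin theta)%C.

From HB Require Import structures.
From mathcomp Require Import all_boot all_order all_algebra.
From mathcomp Require Import complex.
From mathcomp Require Import all_classical all_reals all_analysis.
From mathcomp Require Import zify.
Import Order.TTheory GRing.Theory Num.Theory.
Local Open Scope ring_scope.
Set Implicit Arguments.
Unset Strict Implicit.
Unset Printing Implicit Defensive.

(* Since U is unitary, Ubar is an isometry (Ubar^* Ubar = 1), so P'_1 is a
   self-adjoint projection; sigma is a self-adjoint involution commuting with
   P_x when |x| <= k - 2, and P_x Ubar = Ubar P_{T^-1[[x]]}.  Expanding
   <U~ chi, A U~ phi> therefore turns the two diagonal terms into the claimed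
   projections, while the cross terms vanish: a vector of P'_1 H is Ubar P_1 a,
   so sigma Ubar of it carries the state U|1> in its last tensor factor, which
   Ubar^* sends back into P_1 H, orthogonal to the range Ubar P_0 H. *)

Section ScalarProduct.
Variables (C : numClosedFieldType) (k : nat).
Implicit Types (u v w : vec C k) (K : word k -> word k -> C) (s : seq bool).

Lemma dotDl u v w : dot (u + v) w = dot u w + dot v w.
Proof.
by rewrite /dot -big_split; apply: eq_bigr => y _; rewrite ffunE rmorphD mulrDl.
Qed.

Lemma dotDr u v w : dot u (v + w) = dot u v + dot u w.
Proof.
by rewrite /dot -big_split; apply: eq_bigr => y _; rewrite ffunE mulrDr.
Qed.

Lemma dot0l v : dot 0 v = 0.
Proof. by rewrite /dot big1 // => y _; rewrite ffunE rmorph0 mul0r. Qed.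

Lemma dot0r v : dot v 0 = 0.
Proof. by rewrite /dot big1 // => y _; rewrite ffunE mulr0. Qed.

Lemma dotC u v : dot u v = (dot v u)^*.
Proof.
rewrite /dot rmorph_sum; apply: eq_bigr => y _.
by rewrite rmorphM /= conjCK mulrC.
Qed.

Lemma dotZ c d u v :
  dot [ffun y => c * u y] [ffun y => d * v y] = c^* * d * dot u v.
Proof.
rewrite /dot mulr_sumr; apply: eq_bigr => y _; rewrite !ffunE rmorphM /=.
by rewrite mulrACA.
Qed.

Lemma dot_kapp K u v : dot (kapp K u) v = dot u (kapp (kadj K) v).
Proof.
rewrite /dot /kapp.
under eq_bigr do rewrite ffunE rmorph_sum mulr_suml.
under [RHS]eq_bigr do rewrite ffunE mulr_sumr.
rewrite exchange_big /=; apply: eq_bigr => y _; apply: eq_bigr => z _.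
by rewrite /kadj rmorphM /= mulrCA mulrA.
Qed.

Lemma kadjK K : kadj (kadj K) = K.
Proof. by apply/funext => z; apply/funext => y; rewrite /kadj conjCK. Qed.

Lemma kappD K u v : kapp K (u + v) = kapp K u + kapp K v.
Proof.
apply/ffunP => z; rewrite !ffunE -big_split; apply: eq_bigr => y _.
by rewrite ffunE mulrDr.
Qed.

Lemma kapp0 K : kapp K 0 = 0.
Proof.
by apply/ffunP => z; rewrite !ffunE big1 // => y _; rewrite ffunE mulr0.
Qed.

Lemma kappZ K c u : kapp K [ffun y => c * u y] = [ffun y => c * kapp K u y].
Proof.
apply/ffunP => z; rewrite !ffunE mulr_sumr; apply: eq_bigr => y _.
by rewrite ffunE mulrCA.
Qed.

Lemma PwD s u v : Pw s (u + v) = Pw s u + Pw s v.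
Proof. by apply/ffunP => y; rewrite !ffunE; case: ifP; rewrite ?addr0. Qed.

Lemma Pw0 s : Pw s (0 : vec C k) = 0.
Proof. by apply/ffunP => y; rewrite !ffunE; case: ifP. Qed.

Lemma PwZ s c u : Pw s [ffun y => c * u y] = [ffun y => c * Pw s u y].
Proof. by apply/ffunP => y; rewrite !ffunE; case: ifP; rewrite ?mulr0. Qed.

Lemma PwK s u : Pw s (Pw s u) = Pw s u.
Proof. by apply/ffunP => y; rewrite !ffunE; case: ifP => // ->. Qed.

Lemma dot_Pw s u v : dot (Pw s u) v = dot u (Pw s v).
Proof.
apply: eq_bigr => y _; rewrite !ffunE.
by case: ifP; rewrite ?rmorph0 ?mul0r ?mulr0.
Qed.

End ScalarProduct.

Section Words.
Variable n : nat.
Implicit Types (z : n.+1.-tuple bool) (s : n.-tuple bool).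

Lemma tuple_belastP z : size (take n z) == n.
Proof. by rewrite size_takel // size_tuple. Qed.
Definition tuple_belast z : n.-tuple bool := Tuple (tuple_belastP z).

Lemma tuple_rcons z : val z = rcons (take n z) (nth false z n).
Proof. by rewrite -take_nth ?size_tuple // take_oversize // size_tuple. Qed.

Lemma tuple_cons z : val z = head false z :: behead z.
Proof. by case: z => [[|a t] //]. Qed.

Lemma eq_tuple_rcons z s b :
  (z == [tuple of rcons s b]) = (take n z == s) && (nth false z n == b).
Proof. by rewrite -val_eqE /= {1}tuple_rcons eqseq_rcons. Qed.

Lemma eq_tuple_cons z s j :
  (z == [tuple of j :: s]) = (head false z == j) && (behead z == s).
Proof. by rewrite -val_eqE /= {1}tuple_cons eqseq_cons. Qed.

Lemma sum_take_tuple (V : zmodType) s (F : n.+1.-tuple bool -> V) :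
  \sum_(z : n.+1.-tuple bool) (if take n z == s then F z else 0) =
  \sum_b F [tuple of rcons s b].
Proof.
rewrite big_bool.
transitivity (\sum_(z : n.+1.-tuple bool)
                ((if z == [tuple of rcons s true] then F z else 0) +
                 (if z == [tuple of rcons s false] then F z else 0))).
  apply: eq_bigr => z _; rewrite !eq_tuple_rcons.
  by case: (take n z == s); case: (nth false z n); rewrite ?addr0 ?add0r.
by rewrite big_split /= -!big_mkcond /= !big_pred1_eq.
Qed.

End Words.

Lemma take_rcons_size T (s : seq T) b n : size s = n -> take n (rcons s b) = s.
Proof. by move=> <-; rewrite -cats1 take_size_cat. Qed.

Lemma b2o_inj : injective b2o.
Proof. by case; case => // /(congr1 val); rewrite /= !inordK. Qed.

Lemma unitary2_col (C : numClosedFieldType) (U : 'M[C]_2) i j : unitary2 U ->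
  \sum_b (U (b2o b) (b2o i))^* * U (b2o b) (b2o j) = (i == j)%:R.
Proof.
move=> /mulmx1C /(congr1 (fun M : 'M[C]_2 => M (b2o i) (b2o j))).
have b2o0 : b2o false = ord0 by apply/val_inj; rewrite /= inordK.
have b2o1 : b2o true = lift ord0 ord0 by apply/val_inj; rewrite /= inordK.
rewrite !mxE big_ord_recl big_ord1 big_bool b2o0 b2o1 addrC.
by rewrite !mxE (inj_eq b2o_inj).
Qed.

Section Shift.
Variables (C : numClosedFieldType) (n : nat) (U : 'M[C]_2).
Implicit Types (u v : vec C n.+1) (x : seq bool) (y z : word n.+1).

Lemma Pw1E j v y : Pw [:: j] v y = if head false y == j then v y else 0.
Proof.
by rewrite ffunE; case: y => [[|a s] //] /=; rewrite take0 eqseq_cons andbT.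
Qed.

Lemma Pw_true_false v : v = Pw [:: true] v + Pw [:: false] v.
Proof.
apply/ffunP => y; rewrite ffunE !Pw1E.
by case: (head false y); rewrite ?addr0 ?add0r.
Qed.

Lemma Ubar_Pw1 j v z :
  Ubar U (Pw [:: j] v) z =
  U (b2o (last false z)) (b2o j) * v [tuple of j :: tuple_belast z].
Proof.
rewrite /Ubar /kapp ffunE (bigD1 [tuple of j :: tuple_belast z]) //=.
rewrite big1 ?addr0.
  by rewrite Pw1E /Ubar_ker /= eqxx mul1r eqxx.
move=> y Hy; rewrite Pw1E /Ubar_ker /=.
case: eqP => E1; last by rewrite !mul0r.
case: eqP => E2; last by rewrite mulr0.
by move: Hy; rewrite eq_tuple_cons E2 /tuple_belast /= -E1 !eqxx.
Qed.

Lemma UbarE v z :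
  Ubar U v z =
  \sum_j U (b2o (last false z)) (b2o j) * v [tuple of j :: tuple_belast z].
Proof.
rewrite {1}(Pw_true_false v) /Ubar kappD ffunE -!/(Ubar _ _).
by rewrite !Ubar_Pw1 big_bool.
Qed.

Lemma Ubar_adjE v y :
  Ubar_adj U v y =
  \sum_b (U (b2o b) (b2o (head false y)))^* * v [tuple of rcons (behead y) b].
Proof.
rewrite /Ubar_adj /kapp ffunE /kadj /Ubar_ker /=.
pose F z := (U (b2o (last false z)) (b2o (head false y)))^* * v z.
transitivity (\sum_b F [tuple of rcons (behead y) b]); last first.
  by apply: eq_bigr => b _; rewrite /F /= last_rcons.
rewrite -sum_take_tuple; apply: eq_bigr => z _; rewrite /F /=.
by case: eqP => _; rewrite rmorphM /= ?rmorph1 ?rmorph0 ?mul1r ?mul0r.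
Qed.

Lemma PT1E x v y :
  PT 1 x v y = if take (size x) (behead y) == x then v y else 0.
Proof.
rewrite /PT sum_ffunE (bigD1 [tuple head false y]) //= big1 ?addr0.
  by rewrite ffunE; case: y => [[|a s] //= Hs]; rewrite eqseq_cons eqxx.
move=> u Hne; rewrite ffunE; case: ifP => // H.
case: u Hne H => [[|a [|b s]] //= Hu] Hne.
move: Hne; case: y => [[|c t] //= Ht] Hne.
rewrite eqseq_cons => /andP [/eqP Eca _].
by move: Hne; rewrite -val_eqE /= Eca eqxx.
Qed.

Lemma Pw_Ubar x v : (size x <= n)%N -> Pw x (Ubar U v) = Ubar U (PT 1 x v).
Proof.
move=> hx; apply/ffunP => z; rewrite [in LHS]ffunE /Ubar /kapp !ffunE.
case: ifP => H.
  apply: eq_bigr => y _; rewrite PT1E /Ubar_ker /=.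
  case: eqP => E; last by rewrite !mul0r.
  by rewrite -E take_takel // H.
symmetry; apply: big1 => y _; rewrite PT1E /Ubar_ker /=.
case: eqP => E; last by rewrite !mul0r.
by rewrite -E take_takel // H mulr0.
Qed.

Lemma Pw1_PT1 j x v : Pw [:: j] (PT 1 x v) = PT 1 x (Pw [:: j] v).
Proof. by apply/ffunP => y; rewrite Pw1E !PT1E Pw1E; case: ifP; case: ifP. Qed.

Lemma dot_Ubar u v : dot (Ubar U u) v = dot u (Ubar_adj U v).
Proof. exact: dot_kapp. Qed.

Lemma dot_Ubar_adj u v : dot (Ubar_adj U u) v = dot u (Ubar U v).
Proof. by rewrite /Ubar_adj dot_kapp kadjK. Qed.

Lemma dot_Pprime u v : dot (Pprime U true u) v = dot u (Pprime U true v).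
Proof. by rewrite /Pprime dot_Ubar dot_Pw dot_Ubar_adj. Qed.

Lemma Pprime0 : Pprime U true (0 : vec C n.+1) = 0.
Proof. by rewrite /Pprime /Ubar_adj kapp0 Pw0 /Ubar kapp0. Qed.

Lemma PprimeZ c v :
  Pprime U true [ffun y => c * v y] = [ffun y => c * Pprime U true v y].
Proof. by rewrite /Pprime /Ubar_adj kappZ PwZ /Ubar kappZ. Qed.

Hypothesis unitaryU : unitary2 U.

Lemma Ubar_adjK : cancel (Ubar U) (Ubar_adj (k := n.+1) U).
Proof.
move=> v; apply/ffunP => y; rewrite Ubar_adjE.
under eq_bigr do rewrite UbarE mulr_sumr.
rewrite exchange_big /=.
transitivity (\sum_j (head false y == j)%:R * v [tuple of j :: behead y]).
  apply: eq_bigr => j _; rewrite -(unitary2_col _ _ unitaryU) mulr_suml.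
  apply: eq_bigr => b _; rewrite last_rcons mulrA; congr (_ * v _).
  by apply/val_inj; rewrite /= take_rcons_size // size_tuple.
rewrite big_bool.
have -> : y = [tuple of head false y :: behead y].
  by apply/val_inj; rewrite /= {1}tuple_cons.
case: (head false y) => /=; rewrite ?mul1r ?mul0r ?addr0 ?add0r;
  by congr (v _); apply: val_inj.
Qed.

Lemma Pprime_Ubar_Pw1 v :
  Pprime U true (Ubar U (Pw [:: true] v)) = Ubar U (Pw [:: true] v).
Proof. by rewrite /Pprime Ubar_adjK PwK. Qed.

Lemma PprimeK v : Pprime U true (Pprime U true v) = Pprime U true v.
Proof. exact: Pprime_Ubar_Pw1. Qed.

End Shift.

Section Swap.
Variables (C : numClosedFieldType) (m : nat).
Implicit Types (v : vec C m.+3) (z y : word m.+3).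

Lemma swap_lastP z :
  size (rcons (rcons (take m.+1 z) (nth false z m.+2)) (nth false z m.+1))
  == m.+3.
Proof. rewrite !size_rcons size_takel ?size_tuple ?eqxx //; lia. Qed.
Definition swap_last z : word m.+3 := Tuple (swap_lastP z).

Lemma size_take_word z : size (take m.+1 z) = m.+1.
Proof. rewrite size_takel ?size_tuple //; lia. Qed.

Lemma word_rcons2 z :
  val z = rcons (rcons (take m.+1 z) (nth false z m.+1)) (nth false z m.+2).
Proof.
by rewrite {1}tuple_rcons; congr rcons; rewrite -take_nth ?size_tuple //; lia.
Qed.

Lemma take_swap_last z : take m.+1 (swap_last z) = take m.+1 z.
Proof. by rewrite /= -!cats1 -catA take_size_cat // size_take_word. Qed.

Lemma nth_swap_last1 z : nth false (swap_last z) m.+1 = nth false z m.+2.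
Proof.
rewrite /= nth_rcons size_rcons size_take_word ltnSn.
by rewrite nth_rcons size_take_word ltnn eqxx.
Qed.

Lemma nth_swap_last2 z : nth false (swap_last z) m.+2 = nth false z m.+1.
Proof. by rewrite /= nth_rcons size_rcons size_take_word ltnn eqxx. Qed.

Lemma swap_lastK : involutive swap_last.
Proof.
move=> z; apply/val_inj; rewrite [RHS]word_rcons2 [LHS]/=.
by rewrite take_swap_last nth_swap_last1 nth_swap_last2.
Qed.

Lemma sigmaE v z : sigma v z = v (swap_last z).
Proof.
rewrite /sigma /kapp ffunE (bigD1 (swap_last z)) //= big1 ?addr0.
  rewrite /sigma_ker (_ : (m.+3 - 2 = m.+1)%N) //=.
  by rewrite take_swap_last nth_swap_last1 nth_swap_last2 !eqxx mul1r.
move=> y Hy; rewrite /sigma_ker (_ : (m.+3 - 2 = m.+1)%N) //=.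
case: and3P => [[/eqP E1 /eqP E2 /eqP E3]|]; last by rewrite mul0r.
by case/eqP: Hy; apply/val_inj; rewrite word_rcons2 /= E1 E2 E3.
Qed.

Lemma sigmaK v : sigma (sigma v) = v.
Proof. by apply/ffunP => z; rewrite !sigmaE swap_lastK. Qed.

Lemma dot_sigma u v : dot (sigma u) v = dot u (sigma v).
Proof.
rewrite /dot (reindex_inj (inv_inj swap_lastK)); apply: eq_bigr => z _.
by rewrite !sigmaE swap_lastK.
Qed.

Lemma Pw_sigma (x : seq bool) v : (size x <= m.+1)%N ->
  Pw x (sigma v) = sigma (Pw x v).
Proof.
move=> hx; apply/ffunP => z; rewrite [in LHS]ffunE [in RHS]sigmaE sigmaE ffunE.
by rewrite -[take _ (swap_last z)](take_takel _ hx) take_swap_last take_takel.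
Qed.

End Swap.

Section LastFactor.
Variables (C : numClosedFieldType) (U : 'M[C]_2).

(* w = G (x) U|j>: the last tensor factor of w is the j-th column of U. *)
Definition ends_with_Ucol n (j : bool) (w : vec C n.+1) :=
  exists G : n.-tuple bool -> C, forall (s : n.-tuple bool) b,
    w [tuple of rcons s b] = U (b2o b) (b2o j) * G s.

Lemma Pw_ends_with_Ucol n j (x : seq bool) (w : vec C n.+1) :
  (size x <= n)%N -> ends_with_Ucol j w -> ends_with_Ucol j (Pw x w).
Proof.
move=> hx [G hG].
exists (fun s : n.-tuple bool => if take (size x) s == x then G s else 0).
move=> s b; rewrite ffunE hG /= -cats1 takel_cat ?size_tuple //.
by case: ifP; rewrite ?mulr0.
Qed.

Lemma sigma_Ubar2_ends_with_Ucol m j (a : vec C m.+3) :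
  ends_with_Ucol j (sigma (Ubar U (Ubar U (Pw [:: j] a)))).
Proof.
exists (fun s : m.+2.-tuple bool =>
  \sum_i U (b2o (nth false s m.+1)) (b2o i) *
         a [tuple of j :: [tuple of i :: tuple_belast s]]).
move=> s b; rewrite sigmaE UbarE mulr_sumr; apply: eq_bigr => i _.
have hs : size s = m.+2 by rewrite size_tuple.
have sw : (swap_last [tuple of rcons s b] : seq bool) =
          rcons (rcons (take m.+1 s) b) (nth false s m.+1).
  rewrite /= (nth_rcons false s b m.+2) (nth_rcons false s b m.+1) hs.
  by rewrite ltnSn ltnn eqxx -[rcons s b]cats1 takel_cat // hs.
have bl : (tuple_belast (swap_last [tuple of rcons s b]) : seq bool) =
          rcons (take m.+1 s) b.
  rewrite -[LHS]/(take m.+2 (swap_last [tuple of rcons s b])) sw.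
  by rewrite take_rcons_size // size_rcons size_takel ?hs.
have bl_last : last i (tuple_belast (swap_last [tuple of rcons s b])) = b.
  by rewrite bl last_rcons.
rewrite Ubar_Pw1 sw last_rcons /= bl_last mulrCA.
congr (_ * (_ * a _)); apply/val_inj => /=.
by rewrite bl take_rcons_size // size_takel ?hs.
Qed.

Lemma Ubar_adj_ends_with_Ucol n j (w : vec C n.+1) : unitary2 U ->
  ends_with_Ucol j w -> Pw [:: ~~ j] (Ubar_adj U w) = 0.
Proof.
move=> unitaryU [G hG]; apply/ffunP => y; rewrite Pw1E [RHS]ffunE.
case: eqP => // hy; rewrite Ubar_adjE.
under eq_bigr do rewrite hG mulrA.
by rewrite -mulr_suml unitary2_col // hy; case: j {hy hG}; rewrite mul0r.
Qed.

Lemma dot_sigma_Pw_Ubar_Pw0 m (x : seq bool) (a b : vec C m.+3) :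
  unitary2 U -> (size x <= m.+1)%N -> Pprime U true a = a ->
  dot (sigma (Pw x (Ubar U a))) (Ubar U (Pw [:: false] b)) = 0.
Proof.
move=> unitaryU hx ha; rewrite -Pw_sigma // -dot_Ubar_adj -dot_Pw -{1}ha.
have := Ubar_adj_ends_with_Ucol unitaryU (Pw_ends_with_Ucol (leqW hx)
          (sigma_Ubar2_ends_with_Ucol true (Ubar_adj U a))).
by rewrite /Pprime => ->; rewrite dot0l.
Qed.

End LastFactor.

Lemma expi_normC (R : realType) (t : R) : (expi t)^* * expi t = 1.
Proof. by rewrite /expi mulrC -normCK normc_def /= cos2Dsin2 sqrtr1 expr1n. Qed.

Theorem proposition7 (R : realType) (k : nat) (U : 'M[R[i]]_2) (theta : R)
  (x : seq bool) :
  (3 <= k)%N ->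
  unitary2 U ->
  (forall a b : 'I_2, `|U a b| = (sqrtC 2)^-1) ->
  (size x < k.-1)%N ->
  tower_conj_eq (k := k) U (Utilde U (expi theta))
    (fun psi => (Pw x psi.1, 0))
    (fun phi => (Pw [:: false] (PT 1 x phi.1),
                 Pprime U true (PT 1 x phi.2)))
  /\
  tower_conj_eq (k := k) U (Utilde U (expi theta))
    (fun psi => (0, Pprime U true (Pw x psi.2)))
    (fun phi => (Pw [:: true] (PT 1 x phi.1), 0)).
Proof.
case: k => [|[|[|m]]] // _ hU _ hx.
have hx2 : (size x <= m.+2)%N by apply: ltnW.
split=> [[phi1 phi2] hphi | phi _].
  split=> [|[chi1 chi2] hchi]; first by rewrite /in_tower /= PprimeK.
  rewrite /in_tower /= in hphi hchi.
  rewrite /tdot /Utilde /= hphi hchi dot0r addr0 PwD Pw_sigma // !dotDl !dotDr.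
  rewrite [dot (Ubar U _) (sigma _)]dotC dot_sigma_Pw_Ubar_Pw0 // rmorph0 add0r.
  rewrite -[dot (sigma _) (Pw _ _)]dot_Pw Pw_sigma // dot_sigma_Pw_Ubar_Pw0 //.
  rewrite addr0 dot_sigma sigmaK !Pw_Ubar // !dot_Ubar !Ubar_adjK //.
  by rewrite dot_Pw -Pw1_PT1 PwK -dot_Pprime hchi addrC.
split=> [|chi _]; first by rewrite /in_tower /= Pprime0.
rewrite /tdot /Utilde /= dot0r add0r dot0r addr0 PwZ PprimeZ dotZ expi_normC.
rewrite mul1r -dot_Pprime Pprime_Ubar_Pw1 // Pw_Ubar // dot_Ubar Ubar_adjK //.
by rewrite dot_Pw -Pw1_PT1 PwK.
Qed.
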